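(* Let $p\ge5$ be prime. There exists a 2-coloring $\chi:\mathbb{Z}/p\mathbb{Z}\to\{B,R\}$ such that for no $i\in\mathbb{Z}/p\mathbb{Z}$ and no $r\in\{1,\dots,p-1\}$ are $\chi(i),\chi(i+r),\chi(i+2r),\chi(i+3r)$ all equal, if and only if $p\in\{5,7,11\}$.
   Context: For prime $p$, every residue 4-AP $(i,i+r,i+2r,i+3r)\pmod p$ with $p\nmid r$ has four distinct residues (is non-degenerate). *)

From mathcomp Require Import all_boot all_order all_algebra.
Set Implicit Arguments. Unset Strict Implicit. Unset Printing Implicit Defensive.
Import GRing.Theory.
Local Open Scope ring_scope.

(* A 2-colouring chi : 'Z_p -> bool (true = B, false = R) has a monochromatic
   4-AP with common difference r (as a nat, 1 <= r <= p-1) starting at i. *)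
Definition mono_4AP (p : nat) (chi : 'Z_p -> bool) (i : 'Z_p) (r : nat) : bool :=
  let d : 'Z_p := r%:R in
  [&& chi (i + d) == chi i, chi (i + d *+ 2) == chi i & chi (i + d *+ 3) == chi i].

(* For p >= 12 no colouring works: every 2-colouring of 0, ..., 34 contains a
   monochromatic 4-term progression of integers (van der Waerden's W(2,4) = 35),
   its common difference r satisfies 3r <= 34, so r <= 11 < p and the
   progression survives reduction mod p.  The upper bound 35 is certified by an
   exhaustive search over colourings of initial segments, pruned as soon as the
   last point completes a monochromatic 4-AP.  Conversely, explicit colourings
   of Z/5, Z/7 and Z/11 are checked by computation, and the only primes in
   [5, 11] are 5, 7 and 11. *)
From mathcomp Require Import all_boot all_order all_algebra.
From mathcomp Require Import zify.
Import GRing.Theory.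

Definition mono4AP_nat (c : nat -> bool) (a r : nat) : bool :=
  [&& c (a + r) == c a, c (a + r * 2) == c a & c (a + r * 3) == c a].

Section PrefixSearch.

Variable bad : seq bool -> bool.

(* Written with [if] rather than [||]/[&&] so that
   call-by-value evaluation prunes at the first [bad] prefix. *)
Fixpoint unavoidable (s : seq bool) (k : nat) : bool :=
  if bad s then true else
  if k is k'.+1 then
    if unavoidable (rcons s true) k' then unavoidable (rcons s false) k'
    else false
  else false.

Lemma mkseqS (g : nat -> bool) n : mkseq g n.+1 = rcons (mkseq g n) (g n).
Proof. by rewrite /mkseq -addn1 iotaD map_cat cats1. Qed.

Lemma unavoidable_mkseq (g : nat -> bool) k n :
  unavoidable (mkseq g n) k -> exists2 m, m <= n + k & bad (mkseq g m).
Proof.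
elim: k n => [|k IHk] n /=; case: ifP => [bad_n _|_] //.
- by exists n; rewrite ?addn0.
- by exists n; rewrite ?leq_addr.
move=> unav; have [|m le_m bad_m] := IHk n.+1; last by exists m; rewrite -?addSnnS.
by rewrite mkseqS; case: (g n) unav; case: unavoidable.
Qed.

End PrefixSearch.

Definition ends_mono4AP (s : seq bool) : bool :=
  let j := (size s).-1 in let c := nth false s j in
  has (fun r => [&& nth false s (j - r) == c, nth false s (j - r * 2) == c
                  & nth false s (j - r * 3) == c])
      (iota 1 (j %/ 3)).

Lemma ends_mono4AP_mkseq (g : nat -> bool) m : ends_mono4AP (mkseq g m) ->
  exists a r, [/\ 0 < r, a + r * 3 < m & mono4AP_nat g a r].
Proof.
rewrite /ends_mono4AP size_mkseq => /hasP [r]; rewrite mem_iota => /andP [r_gt0 r_le].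
have r3_le : r * 3 <= m.-1 by rewrite -leq_divRL // -ltnS -(addn1 (_ %/ _)) addnC.
have lt_m x : x <= m.-1 -> x < m by lia.
rewrite !nth_mkseq ?lt_m ?leq_subr // => /and3P [/eqP e1 /eqP e2 /eqP e3].
exists (m.-1 - r * 3), r; split => //; first by apply: lt_m; lia.
rewrite /mono4AP_nat.
have -> : m.-1 - r * 3 + r = m.-1 - r * 2 by lia.
have -> : m.-1 - r * 3 + r * 2 = m.-1 - r by lia.
have -> : m.-1 - r * 3 + r * 3 = m.-1 by lia.
by rewrite e1 e2 e3 eqxx.
Qed.

Lemma unavoidable_mono4AP_35 : unavoidable ends_mono4AP [::] 35.
Proof. by vm_compute. Qed.

Lemma mono4AP_nat_below_35 (g : nat -> bool) :
  exists a r, [/\ 0 < r, a + r * 3 < 35 & mono4AP_nat g a r].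
Proof.
have [m le_m35] := @unavoidable_mkseq _ g 35 0 unavoidable_mono4AP_35.
move=> /ends_mono4AP_mkseq [a [r [r_gt0 lt_m mono]]].
by exists a, r; split => //; lia.
Qed.

Lemma mono_4AP_natr p (chi : 'Z_p -> bool) a r :
  mono_4AP chi (a%:R)%R r = mono4AP_nat (fun k => chi (k%:R)%R) a r.
Proof. by rewrite /mono_4AP /mono4AP_nat /= -!mulrnA -!natrD. Qed.

Lemma mono_4AP_Zp_ge12 {p} (chi : 'Z_p -> bool) : 12 <= p ->
  exists i r, 1 <= r <= p - 1 /\ mono_4AP chi i r.
Proof.
move=> p_ge12; have [a [r [r_gt0 lt_35 mono]]] := mono4AP_nat_below_35 (fun k => chi (k%:R)%R).
by exists (a%:R)%R, r; rewrite mono_4AP_natr; split => //; lia.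
Qed.

Definition seq_avoids_mono4AP_mod p (s : seq bool) : bool :=
  all (fun a => all (fun r => ~~ mono4AP_nat (fun k => nth false s (k %% p)) a r)
                    (iota 1 p.-1))
      (iota 0 p).

Lemma seq_avoids_mono4AP_modP p (s : seq bool) : 1 < p ->
  seq_avoids_mono4AP_mod p s ->
  exists chi : 'Z_p -> bool, forall i r, 1 <= r <= p - 1 -> ~~ mono_4AP chi i r.
Proof.
move=> p_gt1 avoid; exists (fun x => nth false s x) => i r r_range.
rewrite -[i]natr_Zp mono_4AP_natr /mono4AP_nat /= !val_Zp_nat //.
have i_lt_p : i < p by rewrite -[p in _ < p](Zp_cast p_gt1).
have := allP avoid i; rewrite mem_iota add0n i_lt_p => /(_ isT) /allP /(_ r).
by rewrite mem_iota; apply; lia.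
Qed.

Lemma prime_5_11 p : prime p -> 5 <= p <= 11 -> p \in [:: 5; 7; 11].
Proof. by do 12?case: p => [|p] //. Qed.

Theorem corollary12 (p : nat) (pp : prime p) (p5 : 5 <= p) :
  (exists chi : 'Z_p -> bool,
     forall (i : 'Z_p) (r : nat), 1 <= r <= p - 1 -> ~~ mono_4AP chi i r)
  <-> p \in [:: 5; 7; 11].
Proof.
split => [[chi avoids] | p_small].
  have [p_lt12 | p_ge12] := ltnP p 12; first by apply: prime_5_11; rewrite ?p5.
  have [i [r [r_range mono]]] := mono_4AP_Zp_ge12 chi p_ge12.
  by have := avoids i r r_range; rewrite mono.
rewrite !inE in p_small; case/or3P: p_small => /eqP p_eq; subst p.
- by apply: (@seq_avoids_mono4AP_modP 5 [:: false; false; false; true; true]);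
    vm_compute.
- by apply: (@seq_avoids_mono4AP_modP 7 [:: false; false; false; true; false; true; true]);
    vm_compute.
- by apply: (@seq_avoids_mono4AP_modP 11
    [:: false; false; false; true; false; false; true; false; true; true; true]);
    vm_compute.
Qed.
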